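(* Let $\delta\in(0,1)$ and let $\hat r_i,b_i:\mathcal A\to\mathbb R$ ($i\in[m]$) be data-dependent functions such that $b$ is a bonus term for $\hat r$ at level $\delta$. Let $\pi^{\mathrm{out}}$ be the output of the surrogate-minimization procedure described in the context. Then, with probability at least $1-\delta$, for every Nash equilibrium $\pi^*$, $$\mathrm{Gap}(\pi^{\mathrm{out}})\le 2\max_{i\in[m]}\Big[\max_{a_i'\in\mathcal A_i}\mathbb E_{\bm a_{-i}\sim\pi^*_{-i}}\, b_i(a_i',\bm a_{-i})+\mathbb E_{\bm a\sim\pi^*}\, b_i(\bm a)\Big].$$
   Context: Congestion game setting. There are $m\ge 1$ players and a finite facility set $\mathcal F$ with $F=|\mathcal F|$. Each player $i\in[m]$ has a nonempty finite action set $\mathcal A_i\subseteq 2^{\mathcal F}$ (an action is a subset of facilities). The set of joint actions $\bm a=(a_1,\dots,a_m)$ is $\mathcal A=\prod_{i=1}^m\mathcal A_i$. For $f\in\mathcal F$ let $n^f(\bm a)=|\{i\in[m]: f\in a_i\}|$. For each facility $f$ and each $\ell\in\{1,\dots,m\}$ there is a reward distribution $R^f(\cdot\mid \ell)$ supported in $[-1,1]$ with mean $r^f(\ell)$. The mean reward of player $i$ under $\bm a$ is $r_i(\bm a)=\sum_{f\in a_i} r^f(n^f(\bm a))$. A product policy is $\pi=\pi_1\otimes\cdots\otimes\pi_m$ with $\pi_i\in\Delta(\mathcal A_i)$; $(\pi_i',\pi_{-i})$ denotes $\pi$ with the $i$-th component replaced by $\pi_i'$. Let $V_i^\pi=\mathbb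 E_{\bm a\sim\pi}[r_i(\bm a)]$ and $\mathrm{Gap}(\pi)=\max_{i\in[m]}\big[\max_{\pi_i'\in\Delta(\mathcal A_i)}V_i^{(\pi_i',\pi_{-i})}-V_i^{\pi}\big]$. A Nash equilibrium (NE) is a product policy $\pi$ with $\mathrm{Gap}(\pi)=0$. Offline data: a dataset $\mathcal D=\{(\bm a^k,\bm r^k)\}_{k=1}^n$ in which $\bm a^1,\dots,\bm a^n$ are i.i.d. draws from a fixed distribution $\rho\in\Delta(\mathcal A)$ and the reward information $\bm r^k$ is generated from the game given $\bm a^k$. Bonus term: functions $\hat r_i,b_i:\mathcal A\to\mathbb R$ (computed from $\mathcal D$) are such that $b$ is a bonus term for $\hat r$ at level $\delta$ if, with probability at least $1-\delta$, $|r_i(\bm a)-\hat r_i(\bm a)|\le b_i(\bm a)$ for all $i\in[m]$ and all $\bm a\in\mathcal A$. Surrogate minimization: for a product policy $\pi$ define $\overline V_i^{\pi}=\mathbb E_{\bm a\sim\pi}[\hat r_i(\bm a)+b_i(\bm a)]$, $\underline V_i^{\pi}=\mathbb E_{\bm a\sim\pi}[\hat r_i(\bm a)-b_i(\bm a)]$, and $\overline V_i^{\dagger,\pi_{-i}}=\max_{\pi_i'\in\Delta(\mathcal A_i)}\overline V_i^{(\pi_i',\pi_{-i})}$. The output is any $\pi^{\mathrm{out}}\in\arg\min_{\pi\text{ product}}\max_{i\in[m]}\big[\overline V_i^{\dagger,\pi_{-i}}-\underline V_i^{\pi}\big]$. *)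

From HB Require Import structures.
From mathcomp Require Import all_boot all_order all_algebra.
From mathcomp Require Import all_classical all_reals all_analysis.
Set Implicit Arguments. Unset Strict Implicit. Unset Printing Implicit Defensive.
Import Order.TTheory GRing.Theory Num.Theory.
Local Open Scope classical_set_scope.
Local Open Scope ring_scope.

Section CongestionGame.
Variables (R : realType) (m : nat) (F : finType).

(* A joint action: each player i picks a subset of facilities. *)
Definition joint := {ffun 'I_m -> {set F}}.

Definition load (f : F) (a : joint) : nat := #|[set i | f \in a i]|.

Definition mean_reward (rmean : F -> nat -> R) (i : 'I_m) (a : joint) : R :=
  \sum_(f in a i) rmean f (load f a).

Definition is_dist (A : {set {set F}}) (p : {set F} -> R) : Prop :=
  [/\ forall s, 0 <= p s, forall s, s \notin A -> p s = 0 & \sum_(s in A) p s = 1].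

Definition is_prod_policy (act : 'I_m -> {set {set F}}) (pi : 'I_m -> {set F} -> R) : Prop :=
  forall i, is_dist (act i) (pi i).

Definition Epol (pi : 'I_m -> {set F} -> R) (g : joint -> R) : R :=
  \sum_(a : joint) (\prod_(i < m) pi i (a i)) * g a.

Definition Eminus (pi : 'I_m -> {set F} -> R) (i : 'I_m) (ai : {set F}) (g : joint -> R) : R :=
  \sum_(a : joint | a i == ai) (\prod_(j < m | j != i) pi j (a j)) * g a.

Definition upd (pi : 'I_m -> {set F} -> R) (i : 'I_m) (p : {set F} -> R) : 'I_m -> {set F} -> R :=
  fun j => if j == i then p else pi j.

Definition best_resp (act : 'I_m -> {set {set F}}) (pi : 'I_m -> {set F} -> R)
  (i : 'I_m) (g : joint -> R) : R :=
  sup [set v | exists p, is_dist (act i) p /\ v = Epol (upd pi i p) g].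

Definition max_players (h : 'I_m -> R) : R := sup [set v | exists i, v = h i].

Definition Gap (act : 'I_m -> {set {set F}}) (rmean : F -> nat -> R)
  (pi : 'I_m -> {set F} -> R) : R :=
  max_players (fun i => best_resp act pi i (mean_reward rmean i)
                        - Epol pi (mean_reward rmean i)).

Definition is_NE act rmean pi : Prop := is_prod_policy act pi /\ Gap act rmean pi = 0.

Definition in_joint (act : 'I_m -> {set {set F}}) (a : joint) : Prop := forall i, a i \in act i.

Definition surrogate (act : 'I_m -> {set {set F}}) (rh b : 'I_m -> joint -> R)
  (pi : 'I_m -> {set F} -> R) : R :=
  max_players (fun i => best_resp act pi i (fun a => rh i a + b i a)
                        - Epol pi (fun a => rh i a - b i a)).

Definition is_surrogate_min act rh b pi : Prop :=
  is_prod_policy act pi /\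
  forall pi', is_prod_policy act pi' -> surrogate act rh b pi <= surrogate act rh b pi'.

Definition bonus_bound (act : 'I_m -> {set {set F}}) (b : 'I_m -> joint -> R)
  (pis : 'I_m -> {set F} -> R) : R :=
  max_players (fun i => sup [set v | exists ai, ai \in act i /\ v = Eminus pis i ai (b i)]
                        + Epol pis (b i)).

End CongestionGame.

Definition with_prob_at_least (R : realType) (d : measure_display) (T : measurableType d)
  (P : probability T R) (p : R) (Q : T -> Prop) : Prop :=
  exists S : set T, [/\ measurable S, (p%:E <= P S)%E & forall w, S w -> Q w].

Definition is_bonus (R : realType) (m : nat) (F : finType) (d : measure_display)
  (T : measurableType d) (P : probability T R)
  (act : 'I_m -> {set {set F}}) (rmean : F -> nat -> R)
  (rh b : T -> 'I_m -> joint m F -> R) (delta : R) : Prop :=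
  with_prob_at_least P (1 - delta) (fun w =>
    forall i (a : joint m F), in_joint act a ->
      `|mean_reward rmean i a - rh w i a| <= b w i a).

From HB Require Import structures.
From mathcomp Require Import all_boot all_order all_algebra.
From mathcomp Require Import all_classical all_reals all_analysis.
From mathcomp Require Import lra.
Import Order.TTheory GRing.Theory Num.Theory.
Local Open Scope classical_set_scope.
Local Open Scope ring_scope.
Set Implicit Arguments. Unset Strict Implicit.

(* On the event where every |r_i - rhat_i| is at most b_i, the
   surrogate objective dominates the true gap of every product policy, since
   rhat + b is optimistic for the deviation value and rhat - b pessimistic for
   the value itself.  The minimiser pi_out therefore has Gap(pi_out) at most the
   surrogate at any NE pi*.  At pi*, replacing rhat + b by r + 2b and rhat - b
   by r - 2b, the r-parts cancel because no deviation from pi* gains anything,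
   leaving twice the bonus of a best deviation plus twice the bonus under pi*. *)

Lemma ler_sum_norm (R : realDomainType) (I : finType) (h : I -> R) i :
  h i <= \sum_j `|h j|.
Proof.
rewrite (bigD1 i) //=; apply: le_trans (ler_norm _) _.
by rewrite lerDl sumr_ge0.
Qed.

Section Expectations.
Variables (R : realType) (m : nat) (F : finType).
Implicit Types (pi : 'I_m -> {set F} -> R) (g : joint m F -> R).

Lemma EpolD pi g1 g2 : Epol pi (fun a => g1 a + g2 a) = Epol pi g1 + Epol pi g2.
Proof. by rewrite /Epol -big_split; apply: eq_bigr => a _; rewrite mulrDr. Qed.

Lemma EpolB pi g1 g2 : Epol pi (fun a => g1 a - g2 a) = Epol pi g1 - Epol pi g2.
Proof. by rewrite /Epol -sumrB; apply: eq_bigr => a _; rewrite mulrBr. Qed.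

Lemma EpolZ pi c g : Epol pi (fun a => c * g a) = c * Epol pi g.
Proof. by rewrite /Epol mulr_sumr; apply: eq_bigr => a _; rewrite mulrCA. Qed.

Lemma Epol_upd pi i p g :
  Epol (upd pi i p) g = \sum_(s : {set F}) p s * Eminus pi i s g.
Proof.
rewrite /Epol (partition_big (fun a : joint m F => a i) xpredT) //=.
apply: eq_bigr => s _; rewrite /Eminus mulr_sumr; apply: eq_bigr => a /eqP ai.
rewrite (bigD1 i) //= /upd eqxx ai mulrA; congr (_ * _ * _).
by apply: eq_bigr => j /negbTE ->.
Qed.

Lemma dist_sum_le (A : {set {set F}}) p (c : {set F} -> R) M :
  is_dist A p -> (forall s, s \in A -> c s <= M) -> \sum_s p s * c s <= M.
Proof.
case=> p_ge0 p_out p_sum1 cM.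
rewrite (bigID (mem A)) /= [X in _ + X]big1 ?addr0; last first.
  by move=> s /p_out ->; rewrite mul0r.
apply: le_trans (_ : \sum_(s in A) p s * M <= M).
  by apply: ler_sum => s sA; rewrite ler_wpM2l // cM.
by rewrite -mulr_suml p_sum1 mul1r.
Qed.

Lemma is_dist_point (A : {set {set F}}) s0 :
  s0 \in A -> is_dist A (fun s => (s == s0)%:R : R).
Proof.
move=> s0A; split=> [s | s sA | ]; first by rewrite ler0n.
  by case: eqP sA => // ->; rewrite s0A.
by rewrite (bigD1 s0) //= eqxx big1 ?addr0 // => s /andP[_ /negbTE ->].
Qed.

Variable act : 'I_m -> {set {set F}}.

Lemma is_prod_policy_upd pi i p :
  is_prod_policy act pi -> is_dist (act i) p -> is_prod_policy act (upd pi i p).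
Proof. by move=> pi_prod p_dist j; rewrite /upd; case: eqP => [->|]. Qed.

(* Joint actions outside A get weight 0, so only in_joint actions matter. *)
Lemma ler_Epol pi g1 g2 : is_prod_policy act pi ->
  (forall a, in_joint act a -> g1 a <= g2 a) -> Epol pi g1 <= Epol pi g2.
Proof.
move=> pi_prod g12; apply: ler_sum => a _.
have w_ge0 : 0 <= \prod_(i < m) pi i (a i).
  by apply: prodr_ge0 => i _; case: (pi_prod i).
have [/forallP a_in | /forallPn[j /= aj_out]] := boolP [forall j, a j \in act j].
  by rewrite ler_wpM2l // g12.
have -> : \prod_(i < m) pi i (a i) = 0.
  by rewrite (bigD1 j) //=; case: (pi_prod j) => _ -> // _; rewrite mul0r.
by rewrite !mul0r.
Qed.

Lemma best_resp_ub pi i g :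
  has_ubound [set v | exists p, is_dist (act i) p /\ v = Epol (upd pi i p) g].
Proof.
exists (\sum_s `|Eminus pi i s g|) => _ [p [p_dist ->]].
by rewrite Epol_upd; apply: dist_sum_le p_dist _ => s _; apply: ler_sum_norm.
Qed.

Lemma le_best_resp pi i g p :
  is_dist (act i) p -> Epol (upd pi i p) g <= best_resp act pi i g.
Proof. by move=> p_dist; apply: ub_le_sup; [apply: best_resp_ub | exists p]. Qed.

Lemma best_resp_le pi i g M : (0 < #|act i|)%N ->
  (forall p, is_dist (act i) p -> Epol (upd pi i p) g <= M) ->
  best_resp act pi i g <= M.
Proof.
move=> /card_gt0P[s0 s0A] HM; apply: ge_sup => [|_ [p [p_dist ->]]]; last exact: HM.
by exists (Epol (upd pi i (fun s => (s == s0)%:R)) g), (fun s => (s == s0)%:R);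
  split => //; apply: is_dist_point.
Qed.

Lemma le_sup_Eminus pi i g s : s \in act i ->
  Eminus pi i s g <= sup [set v | exists ai, ai \in act i /\ v = Eminus pi i ai g].
Proof.
move=> sA; apply: ub_le_sup; last by exists s.
by exists (\sum_t `|Eminus pi i t g|) => _ [t [_ ->]]; apply: ler_sum_norm.
Qed.

Lemma le_max_players (h : 'I_m -> R) i : h i <= max_players h.
Proof.
apply: ub_le_sup; last by exists i.
by exists (\sum_j `|h j|) => _ [j ->]; apply: ler_sum_norm.
Qed.

Lemma max_players_le (h : 'I_m -> R) M : (0 < m)%N ->
  (forall i, h i <= M) -> max_players h <= M.
Proof.
move=> m_gt0 hM; apply: ge_sup => [|_ [i ->]] //.
by exists (h (Ordinal m_gt0)), (Ordinal m_gt0).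
Qed.

End Expectations.

Section Pessimism.
Variables (R : realType) (m : nat) (F : finType).
Variables (act : 'I_m -> {set {set F}}) (rmean : F -> nat -> R).
Variables (rh b : 'I_m -> joint m F -> R).
Hypothesis m_gt0 : (0 < m)%N.
Hypothesis act_neq0 : forall i, (0 < #|act i|)%N.
Hypothesis confidence : forall i a, in_joint act a ->
  `|mean_reward rmean i a - rh i a| <= b i a.

Let r : 'I_m -> joint m F -> R := mean_reward rmean.

Lemma reward_le_optimistic i a : in_joint act a -> r i a <= rh i a + b i a.
Proof. by move=> /(confidence i); rewrite ler_norml => /andP[_]; rewrite /r; lra. Qed.

Lemma pessimistic_le_reward i a : in_joint act a -> rh i a - b i a <= r i a.
Proof. by move=> /(confidence i); rewrite ler_norml => /andP[+ _]; rewrite /r; lra. Qed.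

Lemma Gap_le_surrogate pi :
  is_prod_policy act pi -> Gap act rmean pi <= surrogate act rh b pi.
Proof.
move=> pi_prod; apply: max_players_le => // i; apply: le_trans (le_max_players _ i).
apply: lerB; last by apply: ler_Epol => //; apply: pessimistic_le_reward.
apply: best_resp_le => // p p_dist; apply: le_trans (le_best_resp _ _ p_dist).
by apply: ler_Epol; [apply: is_prod_policy_upd | apply: reward_le_optimistic].
Qed.

Lemma NE_best_resp_le pis i :
  is_NE act rmean pis -> best_resp act pis i (r i) <= Epol pis (r i).
Proof.
case=> _ Gap0; rewrite -subr_le0 -Gap0.
exact: (le_max_players (fun i => best_resp act pis i (r i) - Epol pis (r i))).
Qed.

Lemma surrogate_NE_le pis :
  is_NE act rmean pis -> surrogate act rh b pis <= 2 * bonus_bound act b pis.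
Proof.
move=> pis_NE; have [pis_prod _] := pis_NE.
apply: max_players_le => // i.
set Mb := sup [set v | exists ai, ai \in act i /\ v = Eminus pis i ai (b i)].
have optimistic_le : best_resp act pis i (fun a => rh i a + b i a)
    <= Epol pis (r i) + 2 * Mb.
  apply: best_resp_le => // p p_dist.
  apply: le_trans (_ : Epol (upd pis i p) (fun a => r i a + 2 * b i a) <= _).
    apply: ler_Epol; first exact: is_prod_policy_upd.
    by move=> a /(pessimistic_le_reward i) ?; lra.
  rewrite EpolD EpolZ; apply: lerD.
    exact: le_trans (le_best_resp _ _ p_dist) (NE_best_resp_le i pis_NE).
  rewrite ler_pM2l // Epol_upd; apply: dist_sum_le p_dist _ => s.
  exact: le_sup_Eminus.
have pessimistic_ge : Epol pis (r i) - 2 * Epol pis (b i)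
    <= Epol pis (fun a => rh i a - b i a).
  by rewrite -EpolZ -EpolB; apply: ler_Epol => // a /(reward_le_optimistic i) ?; lra.
have := le_max_players (fun i => sup [set v | exists ai, ai \in act i /\
  v = Eminus pis i ai (b i)] + Epol pis (b i)) i.
rewrite -/(bonus_bound act b pis) -/Mb; lra.
Qed.

End Pessimism.

Theorem theorem1 (R : realType) (m : nat) (F : finType)
  (act : 'I_m -> {set {set F}}) (rmean : F -> nat -> R)
  (d : measure_display) (T : measurableType d) (P : probability T R)
  (delta : R) (rh b : T -> 'I_m -> joint m F -> R) :
  (0 < m)%N ->
  (forall i, (0 < #|act i|)%N) ->
  (forall f l, (1 <= l <= m)%N -> `|rmean f l| <= 1) ->
  0 < delta < 1 ->
  is_bonus P act rmean rh b delta ->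
  with_prob_at_least P (1 - delta) (fun w =>
    forall piout, is_surrogate_min act (rh w) (b w) piout ->
    forall pis, is_NE act rmean pis ->
      Gap act rmean piout <= 2 * bonus_bound act (b w) pis).
Proof.
move=> m_gt0 act_neq0 _ _ [S [S_meas PS S_conf]].
exists S; split=> // w /S_conf conf piout [piout_prod piout_min] pis pis_NE.
apply: le_trans (Gap_le_surrogate m_gt0 act_neq0 conf piout_prod) _.
apply: le_trans (piout_min _ pis_NE.1) _.
exact: surrogate_NE_le m_gt0 act_neq0 conf _ pis_NE.
Qed.
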